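(* Let $f\in\mathbb{Q}[x]$ be a univariate numerical polynomial of degree $n$, written uniquely as $f(x)=\sum_{i=0}^n a_i\binom{x}{i}$ with $a_i\in\mathbb{Z}$, and set $a_i=0$ for $i<0$ and $i>n$. An integer $m$ divides $\gcd\{kf(k)\mid k\in\mathbb{Z}\}$ if and only if \[ k(a_k+a_{k-1})\equiv 0\pmod m\ \text{ for all } 1\le k\le n,\qquad a_1+a_0\equiv0\pmod m,\qquad (n+1)a_n\equiv0\pmod m. \]
   Context: A numerical polynomial is a polynomial with rational coefficients taking integer values at all integers; $\binom{x}{i}=x(x-1)\cdots(x-i+1)/i!$. *)

From HB Require Import structures.
From mathcomp Require Import all_boot all_order all_algebra.
Set Implicit Arguments. Unset Strict Implicit. Unset Printing Implicit Defensive.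
Import Order.TTheory GRing.Theory Num.Theory.
Local Open Scope ring_scope.

Definition binom_poly (i : nat) : {poly rat} :=
  (i`!%:R)^-1 *: \prod_(j < i) ('X - (j%:R)%:P).

Definition numerical (f : {poly rat}) : Prop :=
  forall k : int, f.[k%:~R] \is a Num.int.

From HB Require Import structures.
From mathcomp Require Import all_boot all_order all_algebra.
From mathcomp Require Import ring.
Import Order.TTheory GRing.Theory Num.Theory.
Local Open Scope ring_scope.

(* From x binom(x, j) = j binom(x, j) + (j + 1) binom(x, j + 1), the polynomial
   x f(x) has binomial coordinates b_j = j (a_j + a_(j-1)), 0 <= j <= n + 1.
   An integer combination of binomial polynomials takes all its integer values
   in mZ iff every coefficient lies in mZ: binomial polynomials are integer
   valued, and evaluating at k = 0, 1, 2, ... gives a unitriangular system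
   (binom(k, j) = 0 for j > k, binom(k, k) = 1). The three conditions of the
   theorem say exactly that m | b_j for 1 <= j <= n + 1. *)

Lemma horner_binom_poly j (x : rat) :
  (binom_poly j).[x] = (j`!%:R)^-1 * \prod_(i < j) (x - i%:R).
Proof.
rewrite /binom_poly hornerZ horner_prod.
by under eq_bigr => i _ do rewrite hornerXsubC.
Qed.

Lemma horner_binom_poly0 (x : rat) : (binom_poly 0).[x] = 1.
Proof. by rewrite horner_binom_poly big_ord0 fact0 invr1 mulr1. Qed.

Lemma natr_fact_neq0 j : (j`!%:R : rat) != 0.
Proof. by rewrite pnatr_eq0 -lt0n fact_gt0. Qed.

Lemma mul_horner_binom_poly j (x : rat) :
  x * (binom_poly j).[x] =
  j%:R * (binom_poly j).[x] + j.+1%:R * (binom_poly j.+1).[x].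
Proof.
rewrite !horner_binom_poly big_ord_recr /= factS natrM.
by field; rewrite natr_fact_neq0 nat1r pnatr_eq0.
Qed.

Lemma horner_binom_polyS_addr1 j (x : rat) :
  (binom_poly j.+1).[x + 1] = (binom_poly j.+1).[x] + (binom_poly j).[x].
Proof.
rewrite !horner_binom_poly big_ord_recl big_ord_recr /= factS natrM.
have shift (i : 'I_j) : x + 1 - (bump 0 i)%:R = x - i%:R.
  by rewrite /bump leq0n add1n -natr1; ring.
under eq_bigr => i _ do rewrite shift.
by rewrite -natr1; field; rewrite natr_fact_neq0 natr1 pnatr_eq0.
Qed.

Lemma horner_binom_poly_nat j k : (binom_poly j).[k%:R] = 'C(k, j)%:R.
Proof.
elim: k j => [|k IHk] [|j]; rewrite ?horner_binom_poly0 ?bin0 //.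
  by rewrite horner_binom_poly big_ord_recl /= subrr mul0r mulr0 bin0n.
by rewrite -natr1 horner_binom_polyS_addr1 !IHk binS natrD addrC.
Qed.

Lemma horner_binom_poly_oppn j k : (binom_poly j).[- k%:R] \is a Num.int.
Proof.
elim: j k => [|j IHj] k; first by rewrite horner_binom_poly0 rpred1.
elim: k => [|k IHk].
  by rewrite oppr0 (horner_binom_poly_nat _ 0) rpred_nat.
have Bj := IHj k.+1; rewrite -natr1 opprD in Bj *.
by rewrite -(rpredDr _ Bj) -horner_binom_polyS_addr1 subrK.
Qed.

Lemma horner_binom_poly_int j (k : int) :
  (binom_poly j).[k%:~R] \is a Num.int.
Proof.
case: k => k; first by rewrite horner_binom_poly_nat rpred_nat.
by rewrite NegzE intrN horner_binom_poly_oppn.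
Qed.

Lemma horner_mulX_binom_sum n (a : nat -> int) (x : rat) : a n.+1 = 0 ->
  x * (\sum_(i < n.+1) (a i)%:~R *: binom_poly i).[x] =
  \sum_(j < n.+2) (j%:Z * (a j + a j.-1))%:~R * (binom_poly j).[x].
Proof.
move=> an1_eq0; rewrite horner_sum mulr_sumr.
under eq_bigr => i _ do rewrite hornerZ mulrCA mul_horner_binom_poly mulrDr.
under [RHS]eq_bigr => j _ do rewrite intrM intrD mulrDr mulrDl.
rewrite !big_split /= [in RHS]big_ord_recr [X in _ = _ + X]big_ord_recl /=.
rewrite an1_eq0 !mulr0 !mul0r addr0 add0r.
congr (_ + _); apply: eq_bigr => i _.
  by rewrite -!pmulrn; ring.
by rewrite /bump leq0n add0n add1n -!pmulrn; ring.
Qed.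

Lemma dvdz_coefs_of_binom_values (m : int) N (b : nat -> int) :
  (forall k, (k < N)%N -> (m %| \sum_(j < N) b j * 'C(k, j)%:Z)%Z) ->
  forall j, (j < N)%N -> (m %| b j)%Z.
Proof.
move=> dvd_sum; elim/ltn_ind=> j IHj ltjN.
have := dvd_sum j ltjN; rewrite (bigD1 (Ordinal ltjN)) //= binn mulr1.
rewrite rpredDr //; apply: rpred_sum => i /eqP neq_ij.
have [ltij | leji] := ltnP i j; first exact/dvdz_mulr/IHj/(ltn_trans ltij).
rewrite bin_small ?mulr0 ?dvdz0 // ltn_neqAle leji andbT.
by apply/eqP => eq_ji; apply: neq_ij; apply: val_inj.
Qed.

Lemma horner_binom_comb_dvdz (m : int) N (b : nat -> int) (k : int) :
  (forall j, (j < N)%N -> (m %| b j)%Z) ->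
  exists z : int,
    \sum_(j < N) (b j)%:~R * (binom_poly j).[k%:~R] = (m * z)%:~R :> rat.
Proof.
move=> dvd_b.
have /intrP [z Ez] :
    \sum_(j < N) ((b j %/ m)%Z)%:~R * (binom_poly j).[k%:~R] \is a Num.int.
  by apply: rpred_sum => j _; rewrite rpredM ?rpred_int ?horner_binom_poly_int.
exists z; rewrite intrM -Ez mulr_sumr; apply: eq_bigr => j _.
by rewrite mulrA -intrM [m * _]mulrC divzK ?dvd_b.
Qed.

Lemma dvdz_mulX_binom_coefs (m : int) n (a : nat -> int) : a n.+1 = 0 ->
  (forall j, (j < n.+2)%N -> (m %| j%:Z * (a j + a j.-1))%Z) <->
  [/\ forall k : nat, (1 <= k <= n)%N -> (m %| k%:Z * (a k + a k.-1))%Z,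
      (m %| a 1%N + a 0%N)%Z
    & (m %| (n.+1)%:Z * a n)%Z].
Proof.
move=> an1_eq0; split=> [dvd_b | [dvd_mid _ dvd_last] [|j] ltjn].
- split=> [k /andP [_ lekn]||]; first exact/dvd_b/leqW.
    by have := dvd_b 1%N isT; rewrite mul1r.
  by have := dvd_b n.+1 (leqnn _); rewrite an1_eq0 add0r.
- by rewrite mul0r dvdz0.
- have [-> | ltjn'] := eqVneq j n; first by rewrite an1_eq0 add0r.
  by apply: dvd_mid; rewrite /= ltn_neqAle ltjn'.
Qed.

Theorem corollary3p7 (f : {poly rat}) (n : nat) (a : nat -> int) (m : int) :
  numerical f ->
  size f = n.+1 ->
  f = \sum_(i < n.+1) (a i)%:~R *: binom_poly i ->
  (forall i, (n < i)%N -> a i = 0) ->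
  ((forall k : int, exists z : int,
       (k%:~R * f.[k%:~R] : rat) = (m * z)%:~R)
   <->
   [/\ forall k : nat, (1 <= k <= n)%N -> (m %| k%:Z * (a k + a k.-1))%Z,
       (m %| a 1%N + a 0%N)%Z
     & (m %| (n.+1)%:Z * a n)%Z]).
Proof.
move=> _ _ -> a_gt_n.
have an1_eq0 : a n.+1 = 0 by apply: a_gt_n.
have coefsE := dvdz_mulX_binom_coefs m n a an1_eq0.
pose b j := j%:Z * (a j + a j.-1).
split=> [dvd_vals | /coefsE dvd_b k]; last first.
  rewrite horner_mulX_binom_sum //.
  exact: (@horner_binom_comb_dvdz m n.+2 b).
apply/coefsE/(@dvdz_coefs_of_binom_values m n.+2 b) => k _.
have [z] := dvd_vals k; rewrite horner_mulX_binom_sum // => Ez.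
suff -> : \sum_(j < n.+2) b j * 'C(k, j) = m * z by apply/dvdz_mulr/dvdzz.
apply: (@intr_inj rat).
rewrite -Ez rmorph_sum; apply: eq_bigr => j _.
by rewrite /= intrM (_ : k%:~R = k%:R) // horner_binom_poly_nat.
Qed.
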